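(* For every $n\geq1$, $Z_{\mathbb{A}_n}$ is the disjoint union of (an open subvariety isomorphic to) $Y_{\mathbb{A}_n}$ and (a closed subvariety isomorphic to) $Y_{\mathbb{A}_{n-1}}$. The number of points of $Z_{\mathbb{A}_n}$ over $\mathbb{F}_q$ is $q^{n+1}$.
   Context: For $n\ge1$, $Z_{\mathbb{A}_n}$ is the affine variety in variables $(\alpha,x_1,\dots,x_n,x'_1,\dots,x'_n)$ ($\alpha$ arbitrary) defined by $x_1x'_1=1+\alpha x_2$, $x_ix'_i=1+x_{i-1}x_{i+1}$ for $2\le i\le n-1$, $x_nx'_n=1+x_{n-1}$ (for $n=1$: $x_1x'_1=1+\alpha$). $Y_{\mathbb{A}_n}$ is the open subvariety where $\alpha\neq0$ (the union of the fibers $X_n(\alpha)$ over invertible $\alpha$); by convention $Y_{\mathbb{A}_0}=\mathbb{A}^1\setminus\{0\}$. *)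

From HB Require Import structures.
From mathcomp Require Import all_boot all_order all_algebra all_field.
Set Implicit Arguments. Unset Strict Implicit. Unset Printing Implicit Defensive.
Import GRing.Theory.
Local Open Scope ring_scope.

(* A point (alpha, x, x') with x = (x_1,...,x_n), x' = (x'_1,...,x'_n):
   x i (i : 'I_n, 0-based) stands for x_{i+1}. *)
Definition pt (n : nat) (R : Type) : Type :=
  (R * {ffun 'I_n -> R} * {ffun 'I_n -> R})%type.

Definition alpha_of n R (p : pt n R) : R := p.1.1.
Definition x_of n R (p : pt n R) : {ffun 'I_n -> R} := p.1.2.
Definition x'_of n R (p : pt n R) : {ffun 'I_n -> R} := p.2.

(* Padded coordinates: xc k = x_k for 1 <= k <= n, xc 0 = alpha,
   xc (n+1) = 1 (and 1 beyond). *)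
Definition xc (R : nzRingType) n (a : R) (x : {ffun 'I_n -> R}) (k : nat) : R :=
  if k == 0%N then a
  else match (insub k.-1 : option 'I_n) with Some i => x i | None => 1 end.

(* Equations of Z_{A_n}:
   x_1 x'_1 = 1 + alpha x_2, x_i x'_i = 1 + x_{i-1} x_{i+1} (2 <= i <= n-1),
   x_n x'_n = 1 + x_{n-1}  (for n = 1: x_1 x'_1 = 1 + alpha);
   uniformly: x_i x'_i = 1 + xc (i-1) * xc (i+1) for 1 <= i <= n. *)
Definition inZ (R : nzRingType) n (p : pt n R) : bool :=
  [forall i : 'I_n,
     x_of p i * x'_of p i ==
       1 + xc (alpha_of p) (x_of p) i * xc (alpha_of p) (x_of p) i.+2].

(* Y_{A_n}: the open subvariety alpha invertible.
   For n = 0 there are no x-coordinates and no equations, so Y_{A_0}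
   is A^1 \ {0}, matching the convention of the paper. *)
Definition inY (R : unitRingType) n (p : pt n R) : bool :=
  inZ p && (alpha_of p \is a GRing.unit).

Definition inC (R : nzRingType) n (p : pt n R) : bool :=
  inZ p && (alpha_of p == 0).

Definition map_pt (R S : nzRingType) (phi : {rmorphism R -> S}) n (p : pt n R)
  : pt n S :=
  (phi (alpha_of p), [ffun i => phi (x_of p i)], [ffun i => phi (x'_of p i)]).

(* A natural isomorphism (of functors of points on commutative rings,
   i.e. an isomorphism of affine schemes over Z) between the subfunctor
   P of pt m and the subfunctor Q of pt k. *)
Definition nat_iso (m k : nat)
  (P : forall R : comUnitRingType, pt m R -> bool)
  (Q : forall R : comUnitRingType, pt k R -> bool) : Prop :=
  exists (f : forall R : comUnitRingType, pt m R -> pt k R)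
         (g : forall R : comUnitRingType, pt k R -> pt m R),
    (forall (R : comUnitRingType) (p : pt m R),
        P R p -> Q R (f R p) /\ g R (f R p) = p) /\
    (forall (R : comUnitRingType) (q : pt k R),
        Q R q -> P R (g R q) /\ f R (g R q) = q) /\
    (forall (R S : comUnitRingType) (phi : {rmorphism R -> S}) (p : pt m R),
        P R p -> f S (map_pt phi p) = map_pt phi (f R p)) /\
    (forall (R S : comUnitRingType) (phi : {rmorphism R -> S}) (q : pt k R),
        Q R q -> g S (map_pt phi q) = map_pt phi (g R q)).

From HB Require Import structures.
From mathcomp Require Import all_boot all_order all_algebra all_field.
Import GRing.Theory.
Local Open Scope ring_scope.

Set Implicit Arguments. Unset Strict Implicit.

(** Peeling off the first coordinate: a point [(alpha, x, x')] of [Z_{A_(n+1)}]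
    is a point [(x_1, (x_2,...), (x'_2,...))] of [Z_{A_n}] together with the
    pair [(alpha, x'_1)], which only has to satisfy the single equation
    [x_1 x'_1 = 1 + alpha x_2].  Over a field that equation is linear in
    [(alpha, x'_1)] with coefficients [(x_1, x_2)] that cannot both vanish on
    [Z_{A_n}], so each fibre is an affine line and [#Z_{A_n}(F_q) = q^(n+1)] by
    induction.  On [alpha = 0] the equation reads [x_1 x'_1 = 1], so [x'_1] is
    determined and [x_1] must be invertible: this is the isomorphism of the
    closed part with [Y_{A_(n-1)}]. *)

Definition cons_pt (R : Type) n (a y : R) (r : pt n R) : pt n.+1 R :=
  (a, [ffun i => if unlift ord0 i is Some j then x_of r j else alpha_of r],
      [ffun i => if unlift ord0 i is Some j then x'_of r j else y]).

Definition behead_pt (R : Type) n (p : pt n.+1 R) : pt n R :=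
  (x_of p ord0, [ffun j => x_of p (lift ord0 j)], [ffun j => x'_of p (lift ord0 j)]).

Section ConsPt.

Variables (R : Type) (n : nat).

Lemma cons_ptK (a y : R) : cancel (@cons_pt R n a y) (@behead_pt R n).
Proof.
case=> [[b x] x']; rewrite /behead_pt /cons_pt /x_of /x'_of /alpha_of /= ffunE.
by rewrite unlift_none; congr (_, _, _); apply/ffunP => j; rewrite !ffunE liftK.
Qed.

Lemma behead_ptK (p : pt n.+1 R) :
  cons_pt (alpha_of p) (x'_of p ord0) (behead_pt p) = p.
Proof.
case: p => [[b x] x']; rewrite /behead_pt /cons_pt /x_of /x'_of /alpha_of /=.
by congr (_, _, _); apply/ffunP => i; rewrite !ffunE;
  case: unliftP => [j ->|->]; rewrite ?ffunE.
Qed.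

Variables (a y : R) (r : pt n R).

Lemma x_cons_pt0 : x_of (cons_pt a y r) ord0 = alpha_of r.
Proof. by rewrite /= ffunE unlift_none. Qed.

Lemma x_cons_ptS j : x_of (cons_pt a y r) (lift ord0 j) = x_of r j.
Proof. by rewrite /= ffunE liftK. Qed.

Lemma x'_cons_pt0 : x'_of (cons_pt a y r) ord0 = y.
Proof. by rewrite /= ffunE unlift_none. Qed.

Lemma x'_cons_ptS j : x'_of (cons_pt a y r) (lift ord0 j) = x'_of r j.
Proof. by rewrite /= ffunE liftK. Qed.

End ConsPt.

Lemma xc_ord (R : nzRingType) n (a : R) (x : {ffun 'I_n -> R}) (i : 'I_n) :
  xc a x i.+1 = x i.
Proof. by rewrite /xc /= valK. Qed.

Lemma xc_gt (R : nzRingType) n (a : R) (x : {ffun 'I_n -> R}) k :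
  (n < k)%N -> xc a x k = 1.
Proof. by case: k => // k Hk; rewrite /xc /= insubF // ltnNge -ltnS Hk. Qed.

Lemma xc_cons_ptS (R : nzRingType) n (a y : R) (r : pt n R) k :
  xc a (x_of (cons_pt a y r)) k.+1 = xc (alpha_of r) (x_of r) k.
Proof.
case: k => [|k]; first by rewrite (xc_ord _ _ ord0) x_cons_pt0.
have [lt_kn|le_nk] := ltnP k n; last by rewrite !xc_gt.
have -> : k.+2 = (lift ord0 (Ordinal lt_kn)).+1 by rewrite lift0.
by rewrite xc_ord x_cons_ptS (xc_ord _ _ (Ordinal lt_kn)).
Qed.

Definition first_eqn (R : nzRingType) n (a y : R) (r : pt n R) : bool :=
  alpha_of r * y == 1 + a * xc (alpha_of r) (x_of r) 1.

Lemma inZ_cons_pt (R : nzRingType) n (a y : R) (r : pt n R) :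
  inZ (cons_pt a y r) = first_eqn a y r && inZ r.
Proof.
apply/forallP/andP => [Zp|[eq1 /forallP Zr] i].
  split; first by have := Zp ord0; rewrite x_cons_pt0 x'_cons_pt0 xc_cons_ptS.
  apply/forallP => j; have := Zp (lift ord0 j).
  by rewrite lift0 x_cons_ptS x'_cons_ptS !xc_cons_ptS.
case: (unliftP ord0 i) => [j ->|->]; last first.
  by rewrite x_cons_pt0 x'_cons_pt0 xc_cons_ptS.
by rewrite lift0 x_cons_ptS x'_cons_ptS !xc_cons_ptS; apply: Zr.
Qed.

(** On [Z_{A_n}], [alpha = x_1 = 0] would turn the first equation into [0 = 1]. *)
Lemma inZ_alpha_xc1_neq0 (R : nzRingType) n (r : pt n R) :
  inZ r -> (alpha_of r != 0) || (xc (alpha_of r) (x_of r) 1 != 0).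
Proof.
case: n r => [|n] r Zr; first by rewrite xc_gt // oner_neq0 orbT.
have := forallP Zr ord0; rewrite (xc_ord _ _ ord0) /= => eq1.
rewrite -negb_and; apply/negP => /andP[/eqP a0 /eqP x0].
by move: eq1; rewrite x0 a0 !mul0r addr0 eq_sym oner_eq0.
Qed.

Lemma card_pair_sum (A B : finType) (P : A -> B -> bool) :
  #|[set u : A * B | P u.1 u.2]| = (\sum_(b : B) #|[set a | P a b]|)%N.
Proof.
rewrite -sum1_card big_mkcond /=.
rewrite (eq_bigr (fun u : A * B => if P u.1 u.2 then 1 else 0)%N) => [|u _]; last first.
  by rewrite inE.
rewrite -(pair_big xpredT xpredT (fun a b => if P a b then 1 else 0)%N) exchange_big.
apply: eq_bigr => b _; rewrite -sum1_card [RHS]big_mkcond /=.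
by apply: eq_bigr => a _; rewrite !inE.
Qed.

Lemma card_affine_line (F : finFieldType) (b c : F) : (b != 0) || (c != 0) ->
  #|[set u : F * F | b * u.2 == 1 + u.1 * c]| = #|F|.
Proof.
have [-> /= c_neq0|b_neq0 _] := eqVneq b 0.
  have -> : [set u : F * F | 0 * u.2 == 1 + u.1 * c] = [set (- c^-1, y) | y : F].
    apply/setP => -[a y]; rewrite inE /= mul0r.
    apply/eqP/imsetP => [/esym/eqP|[y' _ [-> _]]]; last by rewrite mulNr mulVf ?subrr.
    rewrite addr_eq0 => /eqP ac; exists y => //; congr (_, _).
    by apply: (mulIf c_neq0); rewrite mulNr mulVf // ac opprK.
  by rewrite card_imset ?cardsT // => y1 y2 [].
have -> : [set u : F * F | b * u.2 == 1 + u.1 * c] =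
          [set (a, (1 + a * c) / b) | a : F].
  apply/setP => -[a y]; rewrite inE /=; apply/eqP/imsetP => [eq_by|[a' _ [-> ->]]].
    by exists a; rewrite // -eq_by mulrC mulKf.
  by rewrite mulrC divfK.
by rewrite card_imset ?cardsT // => a1 a2 [].
Qed.

Lemma card_inZS (F : finFieldType) n :
  #|[set p : pt n.+1 F | inZ p]| = (#|F| * #|[set r : pt n F | inZ r]|)%N.
Proof.
pose cons (u : F * F * pt n F) := cons_pt u.1.1 u.1.2 u.2.
pose uncons (p : pt n.+1 F) := ((alpha_of p, x'_of p ord0), behead_pt p).
have consK : cancel cons uncons.
  by move=> [[a y] r]; rewrite /uncons /cons /= cons_ptK x'_cons_pt0.
have unconsK : cancel uncons cons by move=> p; apply: behead_ptK.
have -> : [set p : pt n.+1 F | inZ p] = cons @: [set u | inZ (cons u)].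
  apply/setP => p; rewrite inE; apply/idP/imsetP => [Zp|[u + ->]]; last by rewrite inE.
  by exists (uncons p); rewrite ?inE unconsK.
rewrite card_imset; last exact: can_inj consK.
rewrite (card_pair_sum (fun u r => inZ (cons (u, r)))).
rewrite (eq_bigr (fun r => if inZ r then #|F| else 0%N)) => [|r _].
  by rewrite -big_mkcond sum_nat_const mulnC cardsE.
rewrite /cons /=; under eq_finset do rewrite inZ_cons_pt.
have [Zr|_] := boolP (inZ r); last first.
  by under eq_finset do rewrite andbF; rewrite cards0.
rewrite -(card_affine_line (inZ_alpha_xc1_neq0 Zr)).
by apply: eq_card => u; rewrite !inE andbT.
Qed.

Lemma card_inZ (F : finFieldType) n :
  #|[set p : pt n F | inZ p]| = (#|F| ^ n.+1)%N.
Proof.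
elim: n => [|n IH]; last by rewrite card_inZS IH -expnS.
have -> : [set p : pt 0 F | inZ p] = setT.
  by apply/setP => p; rewrite !inE; apply/forallP => -[].
by rewrite cardsT !card_prod !card_ffun card_ord expn0 expn1 !muln1.
Qed.

Lemma inZ_split_alpha (K : fieldType) n (p : pt n K) :
  inZ p = inY p || inC p /\ ~~ (inY p && inC p).
Proof. by rewrite /inY /inC unitfE; case: (inZ p); case: eqP. Qed.

Lemma behead_pt_map (R S : nzRingType) (phi : {rmorphism R -> S}) n (p : pt n.+1 R) :
  behead_pt (map_pt phi p) = map_pt phi (behead_pt p).
Proof.
rewrite /behead_pt /map_pt /x_of /x'_of /alpha_of /= ffunE.
by congr (_, _, _); apply/ffunP => j; rewrite !ffunE.
Qed.

Lemma cons_pt_map (R S : nzRingType) (phi : {rmorphism R -> S}) n (a y : R)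
    (r : pt n R) :
  cons_pt (phi a) (phi y) (map_pt phi r) = map_pt phi (cons_pt a y r).
Proof.
rewrite /cons_pt /map_pt /x_of /x'_of /alpha_of /=.
by congr (_, _, _); apply/ffunP => i; rewrite !ffunE; case: unliftP => *; rewrite ?ffunE.
Qed.

Lemma inC_cons_pt (R : nzRingType) n (y : R) (r : pt n R) :
  inC (cons_pt 0 y r) = (alpha_of r * y == 1) && inZ r.
Proof. by rewrite /inC inZ_cons_pt /first_eqn mul0r addr0 eqxx andbT. Qed.

Lemma nat_iso_inC_inY n :
  nat_iso (fun R (p : pt n.+1 R) => inC p) (fun R (q : pt n R) => inY q).
Proof.
exists (fun R p => behead_pt p), (fun R q => cons_pt 0 (alpha_of q)^-1 q).
split; [|split; [|split]].
- move=> R p Cp; have /eqP a0 : alpha_of p == 0 by case/andP: Cp.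
  move: Cp; rewrite -{1}(behead_ptK p) a0 inC_cons_pt.
  set x1 := alpha_of (behead_pt p) => /andP[/eqP x1y Zr].
  have x1_unit : x1 \is a GRing.unit.
    by apply/unitrP; exists (x'_of p ord0); rewrite mulrC x1y.
  split; first by rewrite /inY Zr.
  rewrite -[RHS]behead_ptK a0; congr cons_pt.
  by rewrite -[x'_of p ord0](mulKr x1_unit) x1y mulr1.
- move=> R q /andP[Zq q_unit].
  by rewrite cons_ptK inC_cons_pt mulrV // eqxx Zq.
- by move=> R S phi p _; apply: behead_pt_map.
- move=> R S phi q /andP[_ q_unit].
  by rewrite -cons_pt_map rmorph0 (rmorphV _ q_unit).
Qed.

Theorem mainTheorem8 (n : nat) (hn : (1 <= n)%N) :
  (forall (K : fieldType) (p : pt n K),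
      inZ p = inY p || inC p /\ ~~ (inY p && inC p)) /\
  nat_iso (fun R (p : pt n R) => inC p) (fun R (q : pt n.-1 R) => inY q) /\
  (forall F : finFieldType,
      #|[set p : pt n F | inZ p]| = (#|F| ^ n.+1)%N).
Proof.
case: n hn => // n _.
split; first by move=> K p; apply: inZ_split_alpha.
split; first exact: nat_iso_inC_inY.
by move=> F; apply: card_inZ.
Qed.
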